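(* In a $\$$-bounded contract, let $\mathcal{A}$ be an infinite cluster in $(s,\mathcal{P})$ such that $\mathrm{MEV}_{\mathcal{A}}(s,\mathcal{P})>0$. Then $\mathcal{A}$ is a MEV-attacker in $(s,\mathcal{P})$, i.e. an $f$-attacker for $f(\mathcal{B},s,\mathcal{P})=\mathrm{MEV}_{\mathcal{B}}(s,\mathcal{P})$.
   Context: Fix a countably infinite set $\mathbb{A}$ of actors, a set $\mathbb{T}$ of token types and a set $\mathbb{X}$ of transactions. A wallet is a function $\mathbb{T}\to\mathbb{N}$; $\mathbb{W}_{\mathrm{fin}}$ is the set of finite-support wallets. A wallet state is $W:\mathbb{A}\to(\mathbb{T}\to\mathbb{N})$ satisfying the finite tokens axiom $\sum_{\tau}\sum_{a}W(a)(\tau)\in\mathbb{N}$; wallet states are added pointwise, $W(\mathcal{A})=\sum_{a\in\mathcal{A}}W(a)$, and $\mathrm{own}(W)=\{a:\exists\tau.\,W(a)(\tau)>0\}$. A contract consists of blockchain states $\mathbb{S}=\mathbb{C}\times\mathbb{W}$ (contract state, wallet state), a partial transition function $\mapsto:(\mathbb{S}\times\mathbb{X})\rightharpoonup\mathbb{S}$ and initial states $\mathbb{S}_0$. A transaction $x$ is valid in $s$ if $s\xmapsto{x}s'$ for some $s'$. For finite sequences, $s\xrightarrow{\varepsilon}s$, and $s\xrightarrow{\vec{Y}x}s'$ iff either $s\xrightarrow{\vec{Y}}s''\xmapsto{x}s'$, or $s\xrightarrow{\vec{Y}}s'$ and $x$ is not valid in $s'$. $W(s)$ is the wallet state of $s$;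 $W_{\mathcal{A}}(s)=\sum_{a\in\mathcal{A}}W(s)(a)$. A wealth function is an additive map $\$:\mathbb{W}_{\mathrm{fin}}\to\mathbb{N}$; $\$_{\mathcal{A}}(s)=\$(W_{\mathcal{A}}(s))$; gain $G_{\mathcal{A}}(s,\vec{X})=\$_{\mathcal{A}}(s')-\$_{\mathcal{A}}(s)$ where $s\xrightarrow{\vec X}s'$. The contract is $\$$-bounded if for every $s_0\in\mathbb{S}_0$ there is $n$ such that $\$_{\mathbb{A}}(s)<n$ for all $s$ reachable from $s_0$. A transaction deducibility function $\kappa:\mathcal{P}(\mathbb{A})\times\mathcal{P}(\mathbb{X})\to\mathcal{P}(\mathbb{X})$, $(\mathcal{A},\mathcal{X})\mapsto\kappa_{\mathcal{A}}(\mathcal{X})$, satisfies: extensivity; idempotence; monotonicity in both arguments; continuity on increasing chains; finite causes (every finite $\mathcal{X}_0$ lies in $\kappa_{\mathcal{A}_0}(\emptyset)$ for a finite $\mathcal{A}_0$); private knowledge ($\kappa_{\mathcal{A}}(\emptyset)\subseteq\kappa_{\mathcal{A}'}(\emptyset)\Rightarrow\mathcal{A}\subseteq\mathcal{A}'$); no shared secrets ($\kappa_{\mathcal{A}}(\mathcal{X})\cap\kappa_{\mathcal{B}}(\mathcal{X})\subseteq\kappa_{\mathcal{A}\cap\mathcal{B}}(\mathcal{X})$). $\mathcal{X}^*$ denotes finite sequences over $\mathcal{X}$. $\mathrm{uG}_{\mathcal{A}}(s)=\max\{G_{\mathcal{A}}(s,\vec{Y}):\vec{Y}\in\kappa_{\mathcal{A}}(\emptyset)^*\}$;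 $\mathrm{xG}_{\mathcal{A}}(s,\vec{Y})=G_{\mathcal{A}}(s,\vec{Y})-\mathrm{uG}_{\mathcal{A}}(s)$; $\mathrm{MEV}_{\mathcal{A}}(s,\mathcal{P})=\max\{\mathrm{xG}_{\mathcal{A}}(s,\vec{Y}):\vec{Y}\in\kappa_{\mathcal{A}}(\mathcal{P})^*\}$. A renaming of $\mathcal{A}$ is a permutation $\rho:\mathcal{A}\to\mathcal{A}$ (identity outside $\mathcal{A}$ on sets of actors); $(W\rho)(a)=W(\rho^{-1}(a))$ for $a\in\mathcal{A}$, $W(a)$ otherwise; $(\sigma,W)\rho=(\sigma,W\rho)$. $\mathcal{A}$ is a cluster in $(s,\mathcal{P})$ iff for all renamings $\rho_0,\rho_1$ of $\mathcal{A}$, all $\mathcal{B}\subseteq\mathcal{A}$, $s'$, $\vec{X}$, $\mathcal{Y}\subseteq\mathcal{P}$: if $s\rho_0\xrightarrow{\vec{X}}s'$ with $\vec{X}\in\kappa_{\rho_0(\mathcal{B})}(\mathcal{Y})^*$, then there exist $\vec{X}',r'$ with $s\rho_1\xrightarrow{\vec{X}'}r'$, $\vec{X}'\in\kappa_{\rho_1(\mathcal{B})}(\mathcal{Y})^*$ and $W(r')=(W(s')\rho_0^{-1})\rho_1$. $W'$ is an $(\mathcal{A},\mathcal{B})$-wallet redistribution of $W$ iff there exist $W_{\mathcal{A}},W_{\mathcal{B}},W_{\mathcal{C}}$ with $W=W_{\mathcal{A}}+W_{\mathcal{C}}$, $\mathrm{own}(W_{\mathcal{A}})\subseteq\mathcal{A}$;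 $W'=W_{\mathcal{B}}+W_{\mathcal{C}}$, $\mathrm{own}(W_{\mathcal{B}})\subseteq\mathcal{B}$; $\mathrm{own}(W_{\mathcal{C}})\subseteq\mathbb{A}\setminus(\mathcal{A}\cup\mathcal{B})$; $W_{\mathcal{A}}(\mathbb{A})=W_{\mathcal{B}}(\mathbb{A})$; a state $s'$ is an $(\mathcal{A},\mathcal{B})$-wallet redistribution of $s$ iff this holds for their wallet states and they have the same contract state. For $f:\mathcal{P}(\mathbb{A})\times\mathbb{S}\times\mathcal{P}(\mathbb{X})\to\mathbb{Z}$, an infinite $\mathcal{A}$ is an $f$-attacker in $(s,\mathcal{P})$ if for every infinite $\mathcal{B}\subseteq\mathcal{A}$ there is an $(\mathcal{A},\mathcal{B})$-wallet redistribution $s'$ of $s$ with $f(\mathcal{B},s',\mathcal{P})>0$. *)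

From Stdlib Require Import List ZArith Classical ClassicalEpsilon.
Import ListNotations.
Set Implicit Arguments.

Section MEV.

(* Act: actors, Tok: token types, X: transactions *)
Variables (Act Tok X : Type).

Definition countably_infinite (T : Type) : Prop :=
  exists (e : nat -> T) (e' : T -> nat),
    (forall n, e' (e n) = n) /\ (forall t, e (e' t) = t).

Definition finite_set {I : Type} (A : I -> Prop) : Prop :=
  exists l : list I, forall a, A a -> In a l.
Definition infinite_set {I : Type} (A : I -> Prop) : Prop := ~ finite_set A.

Definition subset {I : Type} (A B : I -> Prop) : Prop := forall a, A a -> B a.
Definition emptyset {I : Type} : I -> Prop := fun _ => False.
Definition fullset {I : Type} : I -> Prop := fun _ => True.

Definition wallet := Tok -> nat.
Definition fin_wallet (w : wallet) : Prop :=
  exists l : list Tok, forall t, w t <> 0 -> In t l.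

Definition WFun := Act -> Tok -> nat.
(* finite tokens axiom: sum_tau sum_a W(a)(tau) is a natural number,
   i.e. only finitely many entries W(a)(tau) are non-zero *)
Definition fin_tokens (W : WFun) : Prop :=
  exists l : list (Act * Tok), forall a t, W a t <> 0 -> In (a, t) l.
Definition WState := { W : WFun | fin_tokens W }.
Definition WF (W : WState) : WFun := proj1_sig W.

(** Sum of a family of naturals over a (possibly infinite) index set, when
    only finitely many terms are non-zero. *)
Definition fsum {I : Type} (P : I -> Prop) (f : I -> nat) : nat :=
  epsilon (inhabits 0) (fun n => exists L : list I,
     NoDup L /\ (forall i, In i L -> P i) /\
     (forall i, P i -> f i <> 0 -> In i L) /\ n = list_sum (map f L)).

Definition wsum (A : Act -> Prop) (W : WFun) : wallet :=
  fun t => fsum A (fun a => W a t).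

Definition own (W : WFun) (a : Act) : Prop := exists t, W a t > 0.

Definition wealth_fun (d : wallet -> nat) : Prop :=
  forall w1 w2, fin_wallet w1 -> fin_wallet w2 ->
    d (fun t => w1 t + w2 t) = d w1 + d w2.

(** Contracts: contract states C, partial transition function step
    (partiality via option), initial states init. *)
Variable C : Type.
Definition State := (C * WState)%type.
Variable step : State -> X -> option State.
Variable init : State -> Prop.

(** s --Xs--> s' (deterministic: invalid transactions are skipped). *)
Definition exec (s : State) (l : list X) : State :=
  fold_left (fun st x => match step st x with Some st' => st' | None => st end) l s.

Definition reachable (s0 s : State) : Prop := exists l, exec s0 l = s.

Definition wealth (d : wallet -> nat) (A : Act -> Prop) (s : State) : nat :=
  d (wsum A (WF (snd s))).

Definition dollar_bounded (d : wallet -> nat) : Prop :=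
  forall s0, init s0 -> exists n, forall s, reachable s0 s -> wealth d fullset s < n.

Definition gain (d : wallet -> nat) (A : Act -> Prop) (s : State) (l : list X) : Z :=
  (Z.of_nat (wealth d A (exec s l)) - Z.of_nat (wealth d A s))%Z.

Definition kfun := (Act -> Prop) -> (X -> Prop) -> (X -> Prop).

Record deducibility (k : kfun) : Prop := {
  k_extensive : forall A Xs x, Xs x -> k A Xs x;
  k_idempotent : forall A Xs x, k A (k A Xs) x <-> k A Xs x;
  k_monotone : forall A A' Xs Xs', subset A A' -> subset Xs Xs' ->
      subset (k A Xs) (k A' Xs');
  k_continuous : forall (As : nat -> Act -> Prop) (Xss : nat -> X -> Prop),
      (forall i, subset (As i) (As (S i))) -> (forall i, subset (Xss i) (Xss (S i))) ->
      forall x, k (fun a => exists i, As i a) (fun y => exists i, Xss i y) x <->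
                exists i, k (As i) (Xss i) x;
  k_finite_causes : forall X0 : X -> Prop, finite_set X0 ->
      exists A0 : Act -> Prop, finite_set A0 /\ subset X0 (k A0 emptyset);
  k_private : forall A A', subset (k A emptyset) (k A' emptyset) -> subset A A';
  k_no_shared_secrets : forall A B Xs x, k A Xs x -> k B Xs x ->
      k (fun a => A a /\ B a) Xs x
}.

Definition is_max (S : Z -> Prop) (m : Z) : Prop :=
  S m /\ forall z, S z -> (z <= m)%Z.

Variable k : kfun.
Variable d : wallet -> nat.

Definition is_uG (A : Act -> Prop) (s : State) (u : Z) : Prop :=
  is_max (fun z => exists l, Forall (k A emptyset) l /\ z = gain d A s l) u.

Definition is_MEV (A : Act -> Prop) (s : State) (P : X -> Prop) (m : Z) : Prop :=
  exists u, is_uG A s u /\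
    is_max (fun z => exists l, Forall (k A P) l /\ z = (gain d A s l - u)%Z) m.

Definition MEV_pos (A : Act -> Prop) (s : State) (P : X -> Prop) : Prop :=
  exists m, is_MEV A s P m /\ (0 < m)%Z.

Record renaming (A : Act -> Prop) := {
  rn : Act -> Act;
  rni : Act -> Act;
  rn_K : forall a, rni (rn a) = a;
  rni_K : forall a, rn (rni a) = a;
  rn_fix : forall a, ~ A a -> rn a = a
}.

Lemma rni_fix (A : Act -> Prop) (r : renaming A) : forall a, ~ A a -> rni r a = a.
Proof.
  intros a H. transitivity (rni r (rn r a)).
  - rewrite (rn_fix r a H). reflexivity.
  - apply rn_K.
Qed.

Definition ren_inv (A : Act -> Prop) (r : renaming A) : renaming A :=
  {| rn := rni r; rni := rn r; rn_K := rni_K r; rni_K := rn_K r;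
     rn_fix := rni_fix r |}.

Definition img (A : Act -> Prop) (r : renaming A) (B : Act -> Prop) : Act -> Prop :=
  fun a => exists b, B b /\ rn r b = a.

Definition ren_fun (A : Act -> Prop) (r : renaming A) (W : WFun) : WFun :=
  fun a t => W (rni r a) t.

Lemma ren_fin (A : Act -> Prop) (r : renaming A) (W : WFun) :
  fin_tokens W -> fin_tokens (ren_fun r W).
Proof.
  intros [l Hl]. exists (map (fun p => (rn r (fst p), snd p)) l).
  intros a t H. specialize (Hl _ _ H).
  rewrite <- (rni_K r a) at 1.
  exact (in_map (fun p => (rn r (fst p), snd p)) l (rni r a, t) Hl).
Qed.

Definition ren_W (A : Act -> Prop) (r : renaming A) (W : WState) : WState :=
  exist _ (ren_fun r (WF W)) (ren_fin r (proj2_sig W)).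

Definition ren_state (A : Act -> Prop) (r : renaming A) (s : State) : State :=
  (fst s, ren_W r (snd s)).

Definition cluster (A : Act -> Prop) (s : State) (P : X -> Prop) : Prop :=
  forall (r0 r1 : renaming A) (B : Act -> Prop) (s' : State) (l : list X)
         (Y : X -> Prop),
    subset B A -> subset Y P ->
    exec (ren_state r0 s) l = s' -> Forall (k (img r0 B) Y) l ->
    exists (l' : list X) (r' : State),
      exec (ren_state r1 s) l' = r' /\ Forall (k (img r1 B) Y) l' /\
      WF (snd r') = WF (ren_W r1 (ren_W (ren_inv r0) (snd s'))).

Definition redistribution (A B : Act -> Prop) (s s' : State) : Prop :=
  fst s = fst s' /\
  exists WA WB WC : WState,
    (forall a t, WF (snd s) a t = WF WA a t + WF WC a t) /\
    subset (own (WF WA)) A /\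
    (forall a t, WF (snd s') a t = WF WB a t + WF WC a t) /\
    subset (own (WF WB)) B /\
    subset (own (WF WC)) (fun a => ~ (A a \/ B a)) /\
    (forall t, wsum fullset (WF WA) t = wsum fullset (WF WB) t).

(** 𝒜 is an f-attacker in (s,𝒫); the argument fpos B s' P expresses
    "f(ℬ,s',𝒫) > 0". *)
Definition attacker (fpos : (Act -> Prop) -> State -> (X -> Prop) -> Prop)
    (A : Act -> Prop) (s : State) (P : X -> Prop) : Prop :=
  infinite_set A /\
  forall B : Act -> Prop, subset B A -> infinite_set B ->
    exists s' : State, redistribution A B s s' /\ fpos B s' P.

End MEV.

From Stdlib Require Import List ZArith Lia Classical ClassicalEpsilon
  FunctionalExtensionality PropExtensionality ProofIrrelevance.
Import ListNotations.
Set Implicit Arguments.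

(* Only finitely many members of the cluster A matter: those owning tokens in s
   or after an MEV-extracting sequence ls, and, by continuity of the deducibility
   function, finitely many actors able to deduce ls.  Given an infinite B ⊆ A, a
   renaming r of A moves all of them into B, and moving the wallets of A along r
   is an (A,B)-redistribution s r of s.  The coalition r⁻¹(B) keeps all the wealth
   relevant to ls while its other gains can only be smaller, so it still has
   positive MEV in s; the cluster property transports its gains in s to the gains
   of B in s r, hence MEV_B(s r) = MEV_{r⁻¹(B)}(s) > 0. *)

Section FiniteSums.

Variable I : Type.
Implicit Types (P Q : I -> Prop) (f : I -> nat) (L : list I).

Definition enumerates_support P f L : Prop :=
  NoDup L /\ (forall i, In i L -> P i) /\ (forall i, P i -> f i <> 0 -> In i L).

Definition finite_support f : Prop := exists l : list I, forall i, f i <> 0 -> In i l.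

Lemma list_sum_map_incl f L1 : forall L2,
  NoDup L1 -> incl L1 L2 -> list_sum (map f L1) <= list_sum (map f L2).
Proof.
  induction L1 as [|x L1 IH]; intros L2 Hnd Hincl; simpl; [lia|].
  inversion Hnd as [|? ? Hx Hnd1]; subst.
  destruct (in_split x L2) as [L [L' ->]]; [apply Hincl; now left|].
  assert (Hincl1 : incl L1 (L ++ L')).
  { intros y Hy. assert (Hy' : In y (L ++ x :: L')) by (apply Hincl; now right).
    apply in_app_or in Hy'. apply in_or_app.
    destruct Hy' as [|[->|]]; tauto. }
  specialize (IH _ Hnd1 Hincl1). rewrite !map_app, !list_sum_app in *. simpl. lia.
Qed.

Lemma list_sum_map_filter_nonzero f L :
  list_sum (map f (filter (fun i => negb (f i =? 0)) L)) = list_sum (map f L).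
Proof.
  induction L as [|x L IH]; simpl; [reflexivity|].
  destruct (Nat.eqb_spec (f x) 0); simpl; lia.
Qed.

Lemma enumerates_support_le P Q f L1 L2 :
  enumerates_support P f L1 -> enumerates_support Q f L2 ->
  (forall i, P i -> f i <> 0 -> Q i) ->
  list_sum (map f L1) <= list_sum (map f L2).
Proof.
  intros [Hnd1 [HP1 _]] [_ [_ HQ2]] HPQ.
  rewrite <- list_sum_map_filter_nonzero. apply list_sum_map_incl.
  - now apply NoDup_filter.
  - intros i Hi. apply filter_In in Hi as [Hi Hfi].
    destruct (Nat.eqb_spec (f i) 0) as [|Hf]; [discriminate|]. auto.
Qed.

Lemma enumerates_support_exists P f :
  finite_support f -> exists L, enumerates_support P f L.
Proof.
  intros [l Hl].
  set (keep i := if excluded_middle_informative (P i /\ f i <> 0) then true else false).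
  exists (nodup (fun x y => excluded_middle_informative (x = y)) (filter keep l)).
  split; [apply NoDup_nodup|split].
  - intros i Hi. apply nodup_In, filter_In in Hi as [_ Hi]. unfold keep in Hi.
    destruct excluded_middle_informative as [[]|]; easy.
  - intros i HPi Hfi. apply nodup_In, filter_In. split; [now apply Hl|].
    unfold keep. destruct excluded_middle_informative; tauto.
Qed.

Lemma fsum_enumeration P f L :
  enumerates_support P f L -> fsum P f = list_sum (map f L).
Proof.
  intros HL. unfold fsum.
  match goal with |- epsilon ?inh ?spec = _ =>
    destruct (epsilon_spec inh spec) as [L' [Hnd [HP [Hsupp ->]]]] end.
  - exists (list_sum (map f L)), L. destruct HL as [? []]. auto.
  - assert (HL' : enumerates_support P f L') by (repeat split; auto).
    pose proof (enumerates_support_le HL HL' (fun i Hi _ => Hi)).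
    pose proof (enumerates_support_le HL' HL (fun i Hi _ => Hi)). lia.
Qed.

Lemma fsum_le P Q f :
  finite_support f -> (forall i, P i -> f i <> 0 -> Q i) -> fsum P f <= fsum Q f.
Proof.
  intros Hf HPQ.
  destruct (enumerates_support_exists P Hf) as [L1 H1].
  destruct (enumerates_support_exists Q Hf) as [L2 H2].
  rewrite (fsum_enumeration H1), (fsum_enumeration H2).
  exact (enumerates_support_le H1 H2 HPQ).
Qed.

End FiniteSums.

Lemma fsum_reindex {I J : Type} (P : I -> Prop) (Q : J -> Prop)
  (f : I -> nat) (h : J -> nat) (g : I -> J) (g' : J -> I) :
  (forall i, g' (g i) = i) -> (forall j, Q j <-> exists i, P i /\ g i = j) ->
  (forall i, h (g i) = f i) -> finite_support f -> fsum Q h = fsum P f.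
Proof.
  intros Hg HQ Hh Hf.
  destruct (enumerates_support_exists P Hf) as [L HL].
  pose proof HL as [Hnd [HP Hsupp]].
  assert (HgL : enumerates_support Q h (map g L)).
  { split; [|split].
    - apply NoDup_map_NoDup_ForallPairs; [|exact Hnd].
      intros i i' _ _ E. now rewrite <- (Hg i), E, Hg.
    - intros j Hj. apply in_map_iff in Hj as [i [<- Hi]]. apply HQ. eauto.
    - intros j Hj Hhj. apply HQ in Hj as [i [Hi <-]].
      apply in_map, Hsupp; [exact Hi|]. now rewrite <- Hh. }
  rewrite (fsum_enumeration HgL), (fsum_enumeration HL), map_map.
  f_equal. now apply map_ext.
Qed.

Lemma is_max_exists (S : Z -> Prop) (z0 M : Z) :
  S z0 -> (forall z, S z -> (z <= M)%Z) -> exists m, is_max S m.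
Proof.
  intros Hz0 HM. apply NNPP. intros Hno.
  assert (Hup : forall n : nat, exists z, S z /\ (z0 + Z.of_nat n <= z)%Z).
  { induction n as [|n [z [Hz Hle]]]; [exists z0; split; [exact Hz0|lia]|].
    assert (Hgt : exists z', S z' /\ (z < z')%Z).
    { apply NNPP. intros Hgt. apply Hno. exists z. split; [exact Hz|].
      intros z' Hz'. apply Z.nlt_ge. eauto. }
    destruct Hgt as [z' [Hz' Hlt]]. exists z'. split; [exact Hz'|lia]. }
  destruct (Hup (Z.to_nat (M - z0 + 1))) as [z [Hz Hle]].
  specialize (HM z Hz). lia.
Qed.

Section Renamings.

Variable Act : Type.
Variable A : Act -> Prop.

Lemma rn_stable (r : renaming A) a : A a -> A (rn r a).
Proof.
  intros Ha. apply NNPP. intros Hr.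
  apply Hr. rewrite <- (rn_K r a), (rni_fix r _ Hr) in Ha. exact Ha.
Qed.

Definition ren_id : renaming A :=
  {| rn := fun a => a; rni := fun a => a; rn_K := fun _ => eq_refl;
     rni_K := fun _ => eq_refl; rn_fix := fun _ _ => eq_refl |}.

Lemma ren_comp_K (r1 r2 : renaming A) a : rni r2 (rni r1 (rn r1 (rn r2 a))) = a.
Proof. now rewrite !rn_K. Qed.

Lemma ren_comp_iK (r1 r2 : renaming A) a : rn r1 (rn r2 (rni r2 (rni r1 a))) = a.
Proof. now rewrite !rni_K. Qed.

Lemma ren_comp_fix (r1 r2 : renaming A) a : ~ A a -> rn r1 (rn r2 a) = a.
Proof. intros Ha. now rewrite (rn_fix r2 a Ha), (rn_fix r1 a Ha). Qed.

Definition ren_comp (r1 r2 : renaming A) : renaming A :=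
  {| rn := fun a => rn r1 (rn r2 a); rni := fun a => rni r2 (rni r1 a);
     rn_K := ren_comp_K r1 r2; rni_K := ren_comp_iK r1 r2;
     rn_fix := ren_comp_fix r1 r2 |}.

Definition swap (b c x : Act) : Act :=
  if excluded_middle_informative (x = b) then c
  else if excluded_middle_informative (x = c) then b else x.

Lemma swap_involutive b c x : swap b c (swap b c x) = x.
Proof.
  unfold swap.
  repeat (destruct excluded_middle_informative; subst; try congruence).
Qed.

Lemma swap_fix b c x : A b -> A c -> ~ A x -> swap b c x = x.
Proof.
  intros Hb Hc Hx. unfold swap.
  repeat (destruct excluded_middle_informative; subst; try contradiction).
  reflexivity.
Qed.

Definition ren_swap b c (Hb : A b) (Hc : A c) : renaming A :=
  {| rn := swap b c; rni := swap b c;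
     rn_K := swap_involutive b c; rni_K := swap_involutive b c;
     rn_fix := fun x => @swap_fix b c x Hb Hc |}.

Lemma img_ren_id (B : Act -> Prop) : img ren_id B = B.
Proof.
  apply functional_extensionality. intros a. apply propositional_extensionality.
  split; [intros [b [Hb <-]]; exact Hb|intros Ha; now exists a].
Qed.

Lemma img_preimage (r : renaming A) (B : Act -> Prop) :
  img r (fun a => B (rn r a)) = B.
Proof.
  apply functional_extensionality. intros a. apply propositional_extensionality.
  split; [intros [b [Hb <-]]; exact Hb|intros Ha; exists (rni r a); now rewrite rni_K].
Qed.

Lemma renaming_into (B : Act -> Prop) (L : list Act) :
  subset B A -> infinite_set B ->
  exists r : renaming A, forall a, In a L -> A a -> B (rn r a).
Proof.
  intros HBA HB. induction L as [|x L [r Hr]].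
  - exists ren_id. intros a [].
  - destruct (classic (A x -> B (rn r x))) as [Hx|Hx].
    { exists r. intros a [<-|Ha]; auto. }
    assert (HAx : A x) by (apply NNPP; tauto).
    assert (Hnew : exists b, B b /\ ~ In b (map (rn r) L)).
    { apply NNPP. intros Hno. apply HB. exists (map (rn r) L).
      intros b Hb. apply NNPP. eauto. }
    destruct Hnew as [b [Hb HbL]].
    exists (ren_comp (ren_swap (HBA b Hb) (rn_stable r HAx)) r).
    intros a Ha HAa. simpl. unfold swap.
    destruct excluded_middle_informative as [E|NE].
    { destruct Ha as [<-|Ha]; [now rewrite E|]. exfalso. apply HbL. rewrite <- E. now apply in_map. }
    destruct excluded_middle_informative as [E|NE'].
    + exact Hb.
    + destruct Ha as [<-|Ha]; [tauto|auto].
Qed.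

End Renamings.

Section Wealth.

Variables (Act Tok C : Type).
Variable d : wallet Tok -> nat.
Hypothesis Hd : wealth_fun d.

Lemma fin_tokens_support (W : WFun Act Tok) t :
  fin_tokens W -> finite_support (fun a => W a t).
Proof.
  intros [l Hl]. exists (map fst l). intros a Ha. exact (in_map fst _ _ (Hl a t Ha)).
Qed.

Lemma wsum_fin (B : Act -> Prop) (W : WFun Act Tok) :
  fin_tokens W -> fin_wallet (wsum B W).
Proof.
  intros HW. pose proof HW as [l Hl].
  exists (map snd l). intros t Ht. apply NNPP. intros Hno. apply Ht.
  assert (Hz : forall a, W a t = 0).
  { intros a. apply NNPP. intros Ha. exact (Hno (in_map snd _ (a, t) (Hl a t Ha))). }
  destruct (enumerates_support_exists B (fin_tokens_support t HW)) as [L HL].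
  unfold wsum. rewrite (fsum_enumeration HL). clear - Hz.
  induction L as [|a L IH]; simpl; [|rewrite Hz]; lia.
Qed.

Lemma wealth_fun_mono (w1 w2 : wallet Tok) :
  fin_wallet w1 -> fin_wallet w2 -> (forall t, w1 t <= w2 t) -> d w1 <= d w2.
Proof.
  intros F1 [l Hl] H.
  assert (F3 : fin_wallet (fun t => w2 t - w1 t)).
  { exists l. intros t Ht. apply Hl. lia. }
  replace w2 with (fun t => w1 t + (w2 t - w1 t)).
  - rewrite (Hd F1 F3). lia.
  - apply functional_extensionality. intros t. specialize (H t). lia.
Qed.

Lemma wealth_le (B B' : Act -> Prop) (s : State Act Tok C) :
  (forall a t, B a -> WF (snd s) a t <> 0 -> B' a) -> wealth d B s <= wealth d B' s.
Proof.
  intros HBB'. pose proof (proj2_sig (snd s)) as HW.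
  apply wealth_fun_mono; try apply wsum_fin; try exact HW.
  intros t. apply fsum_le; [now apply fin_tokens_support|]. eauto.
Qed.

Lemma wsum_rename (A B Q : Act -> Prop) (r : renaming A) (W : WFun Act Tok) :
  (forall b, Q b <-> exists a, B a /\ rn r a = b) -> fin_tokens W ->
  wsum Q (ren_fun r W) = wsum B W.
Proof.
  intros HQ HW. apply functional_extensionality. intros t.
  apply (fsum_reindex _ _ _ (rn r) (rni r)); [apply rn_K|exact HQ| |now apply fin_tokens_support].
  intros a. unfold ren_fun. now rewrite rn_K.
Qed.

Lemma wealth_img (A B : Act -> Prop) (r : renaming A) (x y : State Act Tok C) :
  WF (snd x) = ren_fun r (WF (snd y)) -> wealth d (img r B) x = wealth d B y.
Proof.
  intros HW. unfold wealth. rewrite HW, (wsum_rename B); [reflexivity| |].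
  - reflexivity.
  - exact (proj2_sig (snd y)).
Qed.

End Wealth.

Section Redistribution.

Variables (Act Tok C : Type).

Definition restrict_fun (Q : Act -> Prop) (W : WFun Act Tok) : WFun Act Tok :=
  fun a t => if excluded_middle_informative (Q a) then W a t else 0.

Lemma restrict_fin (Q : Act -> Prop) (W : WFun Act Tok) :
  fin_tokens W -> fin_tokens (restrict_fun Q W).
Proof.
  intros [l Hl]. exists l. intros a t Ha. apply Hl. unfold restrict_fun in Ha.
  destruct excluded_middle_informative; tauto.
Qed.

Definition restrict (Q : Act -> Prop) (W : WState Act Tok) : WState Act Tok :=
  exist _ (restrict_fun Q (WF W)) (restrict_fin Q (proj2_sig W)).

Lemma ren_state_id (A : Act -> Prop) (s : State Act Tok C) : ren_state (ren_id A) s = s.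
Proof.
  destruct s as [c [W HW]]. unfold ren_state, ren_W. simpl. f_equal.
  now apply subset_eq_compat.
Qed.

Lemma redistribution_rename (A B : Act -> Prop) (r : renaming A) (s : State Act Tok C) :
  subset B A -> (forall a t, A a -> WF (snd s) a t <> 0 -> B (rn r a)) ->
  redistribution A B s (ren_state r s).
Proof.
  intros HBA Hown. split; [reflexivity|].
  exists (restrict A (snd s)), (ren_W r (restrict A (snd s))),
    (restrict (fun a => ~ A a) (snd s)).
  simpl. unfold ren_fun, restrict_fun, own. split; [|split; [|split; [|split; [|split]]]].
  - intros a t. do 2 destruct excluded_middle_informative; tauto || lia.
  - intros a [t Ht]. destruct excluded_middle_informative; [assumption|lia].
  - intros a t. destruct (classic (A a)) as [Ha|Ha].
    + pose proof (rn_stable (ren_inv r) a Ha) as Ha'. simpl in Ha'.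
      do 2 destruct excluded_middle_informative; tauto || lia.
    + rewrite (rni_fix r a Ha). do 2 destruct excluded_middle_informative; tauto || lia.
  - intros a [t Ht]. destruct excluded_middle_informative as [Ha|]; [|lia].
    rewrite <- (rni_K r a). apply (Hown _ t Ha). lia.
  - intros a [t Ht]. destruct excluded_middle_informative as [Ha|]; [|lia].
    intros [|HBa]; auto.
  - intros t. apply (f_equal (fun w => w t)). symmetry. apply (wsum_rename fullset fullset r (W := restrict_fun A (WF (snd s)))); [|exact (restrict_fin A (proj2_sig (snd s)))].
    intros b. split; [|easy]. intros _. exists (rni r b). split; [exact I|apply rni_K].
Qed.

End Redistribution.

Section Deducibility.

Variables (Act X : Type) (k : kfun Act X).
Hypothesis Hk : deducibility k.

Lemma Forall_k_monotone (A A' : Act -> Prop) (Y Y' : X -> Prop) (l : list X) :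
  subset A A' -> subset Y Y' -> Forall (k A Y) l -> Forall (k A' Y') l.
Proof.
  intros HA HY. apply Forall_impl. exact (k_monotone Hk HA HY).
Qed.

(* Continuity along the chain of the first n actors of an enumeration. *)
Lemma Forall_k_finite_actors (A : Act -> Prop) (Y : X -> Prop) (l : list X) :
  countably_infinite Act -> Forall (k A Y) l ->
  exists F : list Act, Forall (k (fun a => A a /\ In a F) Y) l.
Proof.
  intros [e [e' [He He']]] Hl.
  set (As n a := A a /\ e' a < n).
  assert (Hchain : forall n, subset (As n) (As (S n))).
  { intros n a [Ha Hn]. split; [exact Ha|lia]. }
  assert (Hx : forall x, k A Y x -> exists n, k (As n) Y x).
  { intros x Hx. apply (k_continuous Hk As (fun _ => Y) Hchain (fun _ _ Hy => Hy)).
    revert Hx. apply k_monotone; [exact Hk| |].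
    - intros a Ha. exists (S (e' a)). split; [exact Ha|lia].
    - intros y Hy. now exists 0. }
  assert (HN : exists N, Forall (k (As N) Y) l).
  { induction Hl as [|x l Hx0 _ [N HN]]; [now exists 0|].
    destruct (Hx x Hx0) as [N' HN']. exists (Nat.max N N').
    assert (Hmax : forall n, n <= Nat.max N N' -> subset (As n) (As (Nat.max N N'))).
    { intros n Hn a [Ha Han]. split; [exact Ha|lia]. }
    constructor.
    - revert HN'. apply k_monotone; [exact Hk|apply Hmax; lia|easy].
    - revert HN. apply Forall_k_monotone; [apply Hmax; lia|easy]. }
  destruct HN as [N HN]. exists (map e (seq 0 N)).
  revert HN. apply Forall_k_monotone; [|easy].
  intros a [Ha Han]. split; [exact Ha|].
  rewrite <- (He' a). apply in_map, in_seq. lia.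
Qed.

End Deducibility.

Section MEV.

Variables (Act Tok X C : Type).
Variable step : State Act Tok C -> X -> option (State Act Tok C).
Variables (k : kfun Act X) (d : wallet Tok -> nat).
Hypotheses (Hk : deducibility k) (Hd : wealth_fun d).

Definition gains (B : Act -> Prop) (s : State Act Tok C) (Y : X -> Prop) (z : Z) : Prop :=
  exists l, Forall (k B Y) l /\ z = gain step d B s l.

Lemma is_max_iff (S S' : Z -> Prop) (m : Z) :
  (forall z, S z <-> S' z) -> is_max S m -> is_max S' m.
Proof. intros E [Hm Hup]. split; [now apply E|]. intros z Hz. now apply Hup, E. Qed.

Lemma MEV_pos_of_gains_iff (B B' : Act -> Prop) (s s' : State Act Tok C) (P : X -> Prop) :
  (forall z, gains B s emptyset z <-> gains B' s' emptyset z) ->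
  (forall z, gains B s P z <-> gains B' s' P z) ->
  MEV_pos step k d B s P -> MEV_pos step k d B' s' P.
Proof.
  intros H0 HP [m [[u [Hu Hm]] Hpos]]. exists m. split; [|exact Hpos].
  exists u. split; [exact (is_max_iff _ H0 Hu)|].
  revert Hm. apply is_max_iff. intros z.
  split; intros [l [Hl ->]];
    [destruct (proj1 (HP _) (ex_intro _ l (conj Hl eq_refl))) as [l' [Hl' E]]
    |destruct (proj2 (HP _) (ex_intro _ l (conj Hl eq_refl))) as [l' [Hl' E]]];
    exists l'; split; auto; now rewrite E.
Qed.

(* Gains of [B] are at most those of [A], so its uG is at most that of [A],
   while the gain of [ls] is the same for both. *)
Lemma MEV_pos_sub (A B : Act -> Prop) (s : State Act Tok C) (P : X -> Prop)
    (u M : Z) (ls : list X) :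
  subset B A ->
  (forall a t, A a -> WF (snd s) a t <> 0 -> B a) ->
  (forall a t, A a -> WF (snd (exec step s ls)) a t <> 0 -> B a) ->
  is_uG step k d A s u ->
  (forall l, Forall (k A P) l -> (gain step d A s l - u <= M)%Z) ->
  Forall (k B P) ls -> (0 < gain step d A s ls - u)%Z ->
  MEV_pos step k d B s P.
Proof.
  intros HBA Hs Hls [_ Hu] HM HlsB Hpos.
  assert (Hwealth : forall x : State Act Tok C, wealth d B x <= wealth d A x).
  { intros x. apply (wealth_le Hd). auto. }
  assert (Hwealth_eq : forall x : State Act Tok C, (forall a t, A a -> WF (snd x) a t <> 0 -> B a) ->
            wealth d B x = wealth d A x).
  { intros x Hx. apply Nat.le_antisymm; [apply Hwealth|apply (wealth_le Hd); eauto]. }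
  assert (Hgain : forall l, (gain step d B s l <= gain step d A s l)%Z).
  { intros l. unfold gain. rewrite (Hwealth_eq s Hs).
    specialize (Hwealth (exec step s l)). lia. }
  assert (Hgain_ls : gain step d B s ls = gain step d A s ls).
  { unfold gain. now rewrite (Hwealth_eq s Hs), (Hwealth_eq _ Hls). }
  assert (HkBA : forall Y l, Forall (k B Y) l -> Forall (k A Y) l).
  { intros Y l. now apply (Forall_k_monotone Hk). }
  destruct (@is_max_exists (gains B s emptyset) (gain step d B s []) u)
    as [u' [[l0 [Hl0 ->]] Hu']].
  { now exists []. }
  { intros z [l [Hl ->]]. specialize (Hgain l).
    enough (gain step d A s l <= u)%Z by lia. apply Hu. eauto. }
  assert (Hu'u : (gain step d B s l0 <= u)%Z).
  { specialize (Hgain l0). enough (gain step d A s l0 <= u)%Z by lia. apply Hu. eauto. }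
  set (u' := gain step d B s l0) in *.
  destruct (@is_max_exists (fun z => exists l, Forall (k B P) l /\ z = (gain step d B s l - u')%Z)
              (gain step d B s ls - u') (M + u - u')) as [m' Hm'].
  { eauto. }
  { intros z [l [Hl ->]]. specialize (HM l (HkBA _ _ Hl)). specialize (Hgain l). lia. }
  exists m'. split.
  - exists u'. split; [split; [eauto|exact Hu']|exact Hm'].
  - assert (gain step d B s ls - u' <= m')%Z by (apply Hm'; eauto). lia.
Qed.

Section Cluster.

Variables (A : Act -> Prop) (s : State Act Tok C) (P : X -> Prop).
Hypothesis Hcl : cluster step k A s P.

Lemma cluster_gains (r0 r1 : renaming A) (B : Act -> Prop) (Y : X -> Prop) (z : Z) :
  subset B A -> subset Y P ->
  gains (img r0 B) (ren_state r0 s) Y z -> gains (img r1 B) (ren_state r1 s) Y z.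
Proof.
  intros HBA HYP [l [Hl ->]].
  destruct (@Hcl r0 r1 B _ l Y HBA HYP eq_refl Hl) as [l' [x [Hx [Hl' HW]]]].
  exists l'. split; [exact Hl'|]. unfold gain. rewrite Hx.
  set (y := exec step (ren_state r0 s) l).
  assert (Hy : WF (snd y) = ren_fun r0 (WF (snd (ren_state (ren_inv r0) y)))).
  { do 2 (apply functional_extensionality; intros). simpl. unfold ren_fun. simpl. now rewrite rni_K. }
  rewrite (wealth_img d B (r := r1) x (ren_state (ren_inv r0) y) HW), (wealth_img d B _ _ Hy).
  now rewrite (wealth_img d B (ren_state r1 s) s eq_refl), (wealth_img d B (ren_state r0 s) s eq_refl).
Qed.

Lemma cluster_gains_rename (r : renaming A) (B : Act -> Prop) (Y : X -> Prop) (z : Z) :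
  subset B A -> subset Y P ->
  gains B s Y z <-> gains (img r B) (ren_state r s) Y z.
Proof.
  intros HBA HYP.
  pose proof (@cluster_gains (ren_id A) r B Y z HBA HYP) as Hto.
  pose proof (@cluster_gains r (ren_id A) B Y z HBA HYP) as Hfrom.
  rewrite img_ren_id, ren_state_id in Hto, Hfrom. tauto.
Qed.

Lemma cluster_MEV_pos_rename (r : renaming A) (B : Act -> Prop) :
  subset B A -> MEV_pos step k d B s P -> MEV_pos step k d (img r B) (ren_state r s) P.
Proof.
  intros HBA. apply MEV_pos_of_gains_iff; intros z; apply cluster_gains_rename; easy.
Qed.

End Cluster.

End MEV.

Theorem mainTheorem20
  (Act Tok X : Type) (HAct : countably_infinite Act)
  (C : Type) (step : State Act Tok C -> X -> option (State Act Tok C))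
  (init : State Act Tok C -> Prop)
  (d : wallet Tok -> nat) (Hd : wealth_fun d)
  (k : kfun Act X) (Hk : deducibility k)
  (Hbounded : dollar_bounded step init d)
  (A : Act -> Prop) (s : State Act Tok C) (P : X -> Prop) :
  infinite_set A ->
  cluster step k A s P ->
  MEV_pos step k d A s P ->
  attacker (MEV_pos step k d) A s P.
Proof.
  intros HAinf Hcl [m [[u [Hu [[ls [Hls ->]] Hmax]]] Hpos]].
  split; [exact HAinf|]. intros B HBA HBinf.
  destruct (Forall_k_finite_actors Hk A P HAct Hls) as [F HF].
  destruct (proj2_sig (snd s)) as [L0 HL0].
  destruct (proj2_sig (snd (exec step s ls))) as [L1 HL1].
  destruct (renaming_into (F ++ map fst L0 ++ map fst L1) HBA HBinf) as [r Hr].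
  set (B' := fun a => B (rn r a)).
  assert (HB'A : subset B' A).
  { intros a Ha. rewrite <- (rn_K r a). apply (rn_stable (ren_inv r)), HBA, Ha. }
  assert (Hs : forall a t, A a -> WF (snd s) a t <> 0 -> B' a).
  { intros a t Ha Hat. apply Hr; [|exact Ha]. apply in_or_app. right.
    apply in_or_app. left. exact (in_map fst _ _ (HL0 a t Hat)). }
  assert (Hls' : forall a t, A a -> WF (snd (exec step s ls)) a t <> 0 -> B' a).
  { intros a t Ha Hat. apply Hr; [|exact Ha]. apply in_or_app. right.
    apply in_or_app. right. exact (in_map fst _ _ (HL1 a t Hat)). }
  assert (HlsB' : Forall (k B' P) ls).
  { revert HF. apply (Forall_k_monotone Hk); [|easy].
    intros a [Ha HaF]. apply Hr; [apply in_or_app; now left|exact Ha]. }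
  exists (ren_state r s). split.
  - exact (redistribution_rename r s HBA Hs).
  - rewrite <- (img_preimage r B). apply (cluster_MEV_pos_rename Hcl r HB'A).
    refine (MEV_pos_sub Hk Hd P HB'A Hs Hls' Hu _ HlsB' Hpos).
    intros l Hl. apply Hmax. eauto.
Qed.
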